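(* Let $b_1<b_2$ and $T\ge b_1+b_2$ be positive integers, write $T-b_1=pb_2+q$ with $p\ge 1$ and $1\le q<b_2$, and assume $\frac{T-b_2}{b_1}\ge\left\lfloor\frac{T-b_1}{b_2}\right\rfloor+1=p+1$. Let the SR link use the SR-2 code and the RD link use the RD code (defined in the context, $k=T-b_1$, $n=T-b_1+b_2$), and let the relay send $R[t]=(s_1[t-t_1],\dots,s_k[t-t_k])$ (entries with negative time set to $0$), where $(t_1,\dots,t_k)$ is the delay profile $t_j=(p+1)b_1$ for $j\in[1,q]$ and $t_j=(p-l+1)b_1$ for $j\in[(l-1)b_2+q+1,lb_2+q]$, $l\in[p]$. Then this TBSC is valid and has rate $\frac{T-b_1}{T-b_1+b_2}=R(b_1,b_2,T)$.
   Context: Convention: $m\bmod n$ denotes the representative of $m$ modulo $n$ in $\{1,\dots,n\}$. Point-to-point code: given $P_0,\dots,P_M\in\mathbb F^{k\times(n-k)}$ ($P_i=0$ for $i\notin[0,M]$), messages $S[t]=(s_1[t],\dots,s_k[t])$ ($S[t]=0$ for $t<0$) are sent as $(S[t],P[t])$, $P[t]=\sum_{i=0}^M S[t-i]P_i$; a $(b,M)$ burst channel erases packets so that in every window of $M+1$ consecutive slots the erased slots form at most one run of consecutive slots of length at most $b$. SR-2 code (burst $b_1$, memory $T-b_2$): $P_i\in\mathbb F_2^{k\times b_2}$: (a) for $j\in[p]$, $P_{jb_1}$ has $I_{b_2}$ in rows $(p-j)b_2+q+1,\dots,(p-j+1)b_2+q$, zeros elsewhere; (b) $P_{(p+1)b_1}(r,r)=1$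 for $r\in[q]$, zeros elsewhere; (c) all other $P_i=0$. RD code (burst $b_2$, memory $T-b_1$, applied to $R[t]$): $P'_i\in\mathbb F_2^{k\times b_2}$: (I) for $i\in[b_2-1]$, a single $1$ at $(i\bmod q,\,q+(i\bmod(b_2-q)))$; (II) $P'_{b_2}(r,r)=1$ for $r\in[q]$, zeros elsewhere; (III) for $j\in[p]$, $P'_{jb_2+q}$ has $I_{b_2}$ in rows $(j-1)b_2+q+1,\dots,jb_2+q$, zeros elsewhere; (IV) all other $P'_i=0$. TBSC: SR erasures are bursts of length $\le b_1$ in every window of $T+1$ slots, RD erasures bursts of length $\le b_2$ in every window of $T+1$ slots; valid means the destination recovers every $S[t]$ by time $t+T$. $R(b_1,b_2,T)=\min\{\frac{T-b_1}{T-b_1+b_2},\frac{T-b_2}{T-b_2+b_1}\}$. *)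

From HB Require Import structures.
From mathcomp Require Import all_boot all_order all_algebra.
Set Implicit Arguments.
Unset Strict Implicit.
Unset Printing Implicit Defensive.
Import Order.TTheory GRing.Theory Num.Theory.
Local Open Scope ring_scope.

(* Conventions: time slots are natural numbers t = 0,1,2,...; quantities at
   negative times are 0.  Row/column indices of matrices and coordinates of
   vectors are 0-based here (the paper is 1-based: paper index = ours + 1). *)

Definition mod1 (m n : nat) : nat := if (m %% n == 0)%N then n else (m %% n)%N.

Section Codes.
Variable F : fieldType.

Definition shiftv (k : nat) (X : nat -> 'rV[F]_k) (t d : nat) : 'rV[F]_k :=
  if (d <= t)%N then X (t - d)%N else 0.

(* P[t] = sum_{i >= 0} X[t-i] P_i  (X[t'] = 0 for t' < 0; the P_i are 0
   outside the memory range by definition of each code) *)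
Definition parity (k r : nat) (P : nat -> 'M[F]_(k, r)) (X : nat -> 'rV[F]_k)
  (t : nat) : 'rV[F]_r :=
  \sum_(i < t.+1) shiftv X t i *m P i.

Definition packet (k r : nat) (P : nat -> 'M[F]_(k, r)) (X : nat -> 'rV[F]_k)
  (t : nat) : 'rV[F]_k * 'rV[F]_r := (X t, parity P X t).

(* SR-2 code, k x b2 matrices P_i (0-based rows r, columns c):
   (a) j in [1,p]: P_{j b1} has I_{b2} in (1-based) rows (p-j)b2+q+1 .. (p-j+1)b2+q;
   (b) P_{(p+1)b1}(r,r) = 1 for (1-based) r in [1,q];
   (c) all other entries / matrices are 0. *)
Definition sr2 (b1 b2 p q k : nat) (i : nat) : 'M[F]_(k, b2) :=
  \matrix_(r < k, c < b2)
    (if [exists j : 'I_p.+1,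
           [&& (0 < j)%N, i == (j * b1)%N & (r : nat) == ((p - j) * b2 + q + c)%N]]
        || [&& i == (p.+1 * b1)%N, (r : nat) == (c : nat) & (r < q)%N]
     then 1 else 0).

(* RD code, k x b2 matrices P'_i (0-based rows r, columns c):
   (I) i in [1,b2-1]: single 1 at (1-based) (i mod q, q + (i mod (b2-q)));
   (II) P'_{b2}(r,r) = 1 for (1-based) r in [1,q];
   (III) j in [1,p]: P'_{j b2 + q} has I_{b2} in (1-based) rows (j-1)b2+q+1 .. j b2+q;
   (IV) all other entries / matrices are 0. *)
Definition rdcode (b2 p q k : nat) (i : nat) : 'M[F]_(k, b2) :=
  \matrix_(r < k, c < b2)
    (if [&& (0 < i)%N, (i < b2)%N, (r : nat) == (mod1 i q).-1
          & (c : nat) == (q + mod1 i (b2 - q)).-1]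
        || [&& i == b2, (r : nat) == (c : nat) & (r < q)%N]
        || [exists j : 'I_p.+1,
              [&& (0 < j)%N, i == (j * b2 + q)%N
                & (r : nat) == ((j - 1) * b2 + q + c)%N]]
     then 1 else 0).

(* Delay profile, 0-based coordinate j (paper coordinate j+1):
   t = (p+1) b1 for paper j in [1,q];
   t = (p-l+1) b1 for paper j in [(l-1)b2+q+1, l b2+q], l in [1,p]
   (here l - 1 = (j - q) %/ b2). *)
Definition delay (b1 b2 p q : nat) (j : nat) : nat :=
  if (j < q)%N then (p.+1 * b1)%N else ((p - (j - q) %/ b2) * b1)%N.

Definition relayR (b1 b2 p q k : nat) (S : nat -> 'rV[F]_k) (t : nat) : 'rV[F]_k :=
  \row_(j < k) (shiftv S t (delay b1 b2 p q j)) 0 j.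

End Codes.

(* Erasure pattern e (e t = true iff slot t is erased) such that in every
   window of W consecutive slots the erased slots form at most one run of
   consecutive slots, of length at most b. *)
Definition burst_ok (b W : nat) (e : nat -> bool) : Prop :=
  forall i x y : nat, (i <= x)%N -> (x <= y)%N -> (y < i + W)%N ->
    e x -> e y -> (y - x < b)%N /\ (forall z, (x <= z <= y)%N -> e z).

Definition obs (A : Type) (e : nat -> bool) (pkt : nat -> A) (t : nat)
  : nat -> option A :=
  fun tau => if (tau <= t)%N && ~~ e tau then Some (pkt tau) else None.

(* Three-node burst streaming code (TBSC) validity with delay T:
   - the relay, using only the SR packets received up to time t, can compute
     the signal R[t] it must send at time t, for every SR erasure pattern with
     bursts <= b1 in every window of T+1 slots;
   - the destination, using only the RD packets (R[t], P'[t]) received up to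
     time t+T, recovers S[t], for every RD erasure pattern with bursts <= b2 in
     every window of T+1 slots. *)
Definition tbsc_valid (F : fieldType) (k r1 r2 b1 b2 T : nat)
  (P : nat -> 'M[F]_(k, r1)) (P' : nat -> 'M[F]_(k, r2))
  (relay : (nat -> 'rV[F]_k) -> nat -> 'rV[F]_k) : Prop :=
  (exists decR : nat -> (nat -> option ('rV[F]_k * 'rV[F]_r1)) -> 'rV[F]_k,
     forall e, burst_ok b1 T.+1 e ->
     forall (S : nat -> 'rV[F]_k) (t : nat),
       decR t (obs e (packet P S) t) = relay S t)
  /\
  (exists decD : nat -> (nat -> option ('rV[F]_k * 'rV[F]_r2)) -> 'rV[F]_k,
     forall e, burst_ok b2 T.+1 e ->
     forall (S : nat -> 'rV[F]_k) (t : nat),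
       decD t (obs e (packet P' (relay S)) (t + T)) = S t).

Definition code_rate (k n : nat) : rat := k%:R / n%:R.

Definition Rcap (b1 b2 T : nat) : rat :=
  Num.min ((T - b1)%:R / (T - b1 + b2)%:R) ((T - b2)%:R / (T - b2 + b1)%:R).

From mathcomp Require Import all_boot all_order all_algebra.
From mathcomp Require Import zify.
From Stdlib Require Import ClassicalEpsilon.
Set Implicit Arguments.
Unset Strict Implicit.
Unset Printing Implicit Defensive.
Import Order.TTheory GRing.Theory Num.Theory.
Local Open Scope ring_scope.

(* Every map involved is linear, so a decoder exists as soon as each message sequence
   whose received packets all vanish has a vanishing target.

   Relay: the symbol s_j(t - t_j) is read off one column of the SR-2 parity at time t,
   whose taps sit at the lags b1, 2 b1, ..., (p+1) b1, one row per lag.  A burst of length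
   at most b1 erases at most one of these slots, and if it erases t - t_j then the slot t
   itself is received.

   Destination: the maximal burst [x, y] around an erased slot has length at most b2 and
   is surrounded by T received slots on each side.  The first q ("head") coordinates of R
   are cleared backwards from y, with the diagonal taps at lag b2 and the staircase taps at
   lags below b2; a coordinate of block l then follows from the identity block at lag
   l b2 + q, whose other taps fall outside [x, y] or on the first q coordinates.  The
   delay profile and the condition (T - b2) / b1 >= p + 1 make all these parities arrive
   by time t + T. *)

Lemma eq_mod1 m m' n : (0 < n)%N -> (mod1 m n == mod1 m' n) = (m == m' %[mod n])%N.
Proof.
move=> n_gt0; rewrite /mod1; have := ltn_pmod m n_gt0; have := ltn_pmod m' n_gt0.
by case: (m %% n =P 0)%N; case: (m' %% n =P 0)%N; lia.
Qed.

Lemma mod1_gt0_le m n : (0 < n)%N -> (0 < mod1 m n <= n)%N.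
Proof. by move=> n_gt0; rewrite /mod1; case: eqP; have := ltn_pmod m n_gt0; lia. Qed.

Lemma mod1_mulnD1 s a n : (a < n)%N -> mod1 (s * n + a.+1) n = a.+1.
Proof.
move=> lt_an; rewrite /mod1 modnMDl.
have [lt_San | eq_San] : (a.+1 < n)%N \/ a.+1 = n by lia.
- by rewrite modn_small.
- by rewrite eq_San modnn.
Qed.

Lemma eqn_mod_ltn_addn m m' n : (m == m' %[mod n])%N -> (m < m')%N -> (m + n <= m')%N.
Proof.
move=> eq_mm' lt_mm'; have le_mm' := ltnW lt_mm'.
have dvd_n : (n %| m' - m)%N by rewrite -eqn_mod_dvd // eq_sym.
have := dvdn_leq (_ : 0 < m' - m)%N dvd_n; rewrite subn_gt0 => /(_ lt_mm').
by rewrite leq_subRL // addnC.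
Qed.

Lemma residue_in_window q a d : (a < q)%N -> exists s, (d <= s * q + a < d + q)%N.
Proof.
move=> lt_aq; set m := (d + q - a.+1)%N; exists (m %/ q)%N.
have := divn_eq m q; have := ltn_pmod m (leq_ltn_trans (leq0n a) lt_aq).
move: (m %/ q)%N (m %% q)%N => s r; rewrite /m; lia.
Qed.

Section LinearCodes.
Variable F : fieldType.

Lemma parity_entry k r (P : nat -> 'M[F]_(k, r)) X t (c : 'I_r) :
  parity P X t 0 c = \sum_(i < t.+1) \sum_(j < k) X (t - i)%N 0 j * P i j c.
Proof.
rewrite /parity summxE; apply: eq_bigr => i _.
by rewrite mxE /shiftv -ltnS ltn_ord.
Qed.

Lemma eq_parity k r (P : nat -> 'M[F]_(k, r)) X Y t :
  (forall tau, X tau = Y tau) -> parity P X t = parity P Y t.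
Proof. by move=> eqXY; apply: eq_bigr => i _; rewrite /shiftv eqXY. Qed.

Lemma parity_sub k r (P : nat -> 'M[F]_(k, r)) X Y t :
  parity P (fun tau => X tau - Y tau) t = parity P X t - parity P Y t.
Proof.
rewrite /parity -sumrB; apply: eq_bigr => i _; rewrite /shiftv.
by case: ifP => _; rewrite ?mulmxBl ?mul0mx ?subr0.
Qed.

Lemma parity_eq0_isolated k r (P : nat -> 'M[F]_(k, r)) X t (c : 'I_r) i0 (r0 : 'I_k) :
  parity P X t = 0 -> (i0 <= t)%N -> P i0 r0 c = 1 ->
  (forall i (rr : 'I_k), (i <= t)%N -> (i, rr) != (i0, r0) -> P i rr c != 0 ->
     X (t - i)%N 0 rr = 0) ->
  X (t - i0)%N 0 r0 = 0.
Proof.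
move=> par0 le_i0t P_i0 other0.
have term0 (i : 'I_t.+1) (rr : 'I_k) : (val i, rr) != (i0, r0) ->
    X (t - i)%N 0 rr * P i rr c = 0.
  move=> neq; have [->|nz] := eqVneq (P i rr c) 0; first by rewrite mulr0.
  by rewrite other0 ?mul0r // -ltnS.
have := congr1 (fun M : 'rV[F]_r => M 0 c) par0; rewrite /= parity_entry mxE.
have lt_i0 : (i0 < t.+1)%N by [].
rewrite (bigD1 (Ordinal lt_i0)) //= (bigD1 r0) //= P_i0 mulr1 => <-.
rewrite big1 ?addr0; last first.
  by move=> rr ne_r0; apply: (term0 (Ordinal lt_i0)); rewrite xpair_eqE eqxx.
rewrite big1 ?addr0 // => i ne_i0; apply: big1 => rr _; apply: term0.
rewrite xpair_eqE negb_and; apply/orP; left.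
by apply: contra ne_i0 => /eqP eq_i; apply/eqP/val_inj.
Qed.

Definition silent k r (e : nat -> bool) (P : nat -> 'M[F]_(k, r)) (X : nat -> 'rV[F]_k)
    (h : nat) : Prop :=
  forall tau, (tau <= h)%N -> ~~ e tau -> X tau = 0 /\ parity P X tau = 0.

Lemma obs_eq_received (A : Type) e e' (pkt pkt' : nat -> A) h :
  obs e pkt h = obs e' pkt' h -> forall tau, (tau <= h)%N -> ~~ e tau -> pkt tau = pkt' tau.
Proof.
move=> eq_obs tau le_tau_h; have := congr1 (fun o => o tau) eq_obs; rewrite /obs le_tau_h /=.
by case: (e tau); case: (e' tau) => //= -[].
Qed.

Lemma exists_factorization (I A O C : Type) (c0 : C) (good : A -> Prop) (g : I -> A -> O)
    (f : I -> A -> C) :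
  (forall i a a', good a -> good a' -> g i a = g i a' -> f i a = f i a') ->
  exists dec : I -> O -> C, forall i a, good a -> dec i (g i a) = f i a.
Proof.
move=> f_fibres.
exists (fun i o => match excluded_middle_informative (exists a, good a /\ g i a = o) with
  | left ex_a => f i (proj1_sig (constructive_indefinite_description _ ex_a))
  | right _ => c0 end).
move=> i a good_a; case: excluded_middle_informative => [ex_a|]; last by case; exists a.
by case: (constructive_indefinite_description _ ex_a) => a' [good_a' eq_g] /=; apply: f_fibres.
Qed.

Lemma linear_decoder_exists k r m (P : nat -> 'M[F]_(k, r))
    (enc : (nat -> 'rV[F]_k) -> nat -> 'rV[F]_k) (f : nat -> (nat -> 'rV[F]_k) -> 'rV[F]_m)
    (good : (nat -> bool) -> Prop) (h : nat -> nat) :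
  (forall S S' t, enc (fun tau => S tau - S' tau) t = enc S t - enc S' t) ->
  (forall S S' t, f t (fun tau => S tau - S' tau) = f t S - f t S') ->
  (forall e S t, good e -> silent e P (enc S) (h t) -> f t S = 0) ->
  exists dec, forall e, good e -> forall S t, dec t (obs e (packet P (enc S)) (h t)) = f t S.
Proof.
move=> enc_sub f_sub invisible0.
pose obsf t (a : (nat -> bool) * (nat -> 'rV[F]_k)) := obs a.1 (packet P (enc a.2)) (h t).
have fibres t a a' : good a.1 -> good a'.1 -> obsf t a = obsf t a' -> f t a.2 = f t a'.2.
  case: a a' => [e S] [e' S'] /= good_e _ eq_obs; apply/eqP; rewrite -subr_eq0 -f_sub.
  apply/eqP/(invisible0 e) => // tau le_tau not_e.
  have /pair_equal_spec[eq_msg eq_par] := obs_eq_received eq_obs le_tau not_e.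
  rewrite (eq_parity _ _ (enc_sub S S')) parity_sub enc_sub eq_msg eq_par.
  by rewrite !subrr.
have [dec decP] := exists_factorization 0 fibres.
by exists dec => e good_e S t; apply: (decP t (e, S)).
Qed.

End LinearCodes.

Section Bursts.
Variables (b W : nat) (e : nat -> bool).
Hypothesis burst_e : burst_ok b W e.

Lemma burst_ok_gap x y : e x -> e y -> (x <= y)%N -> (y < x + W)%N -> (y - x < b)%N.
Proof. by move=> ex ey le_xy lt_yW; case: (burst_e (leqnn x) le_xy lt_yW ex ey). Qed.

Lemma burst_ok_far x y : e x -> (x + b <= y \/ y + b <= x)%N ->
  (y < x + W)%N -> (x < y + W)%N -> ~~ e y.
Proof.
move=> ex [le_xby|le_ybx] lt_yW lt_xW; apply/negP => ey.
- by have := burst_ok_gap ex ey; lia.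
- by have := burst_ok_gap ey ex; lia.
Qed.

End Bursts.

(* [x, y] is the maximal burst through u: an erasure within T slots of it would
   belong to it. *)
Lemma burst_ok_window b T (e : nat -> bool) u : burst_ok b T.+1 e -> (b <= T)%N -> e u ->
  exists x y, [/\ (x <= u <= y)%N, (y < x + b)%N,
     (forall z, (z < x)%N -> (x <= z + T)%N -> ~~ e z) &
     (forall z, (y < z)%N -> (z <= y + T)%N -> ~~ e z)].
Proof.
move=> burst_e le_bT eu.
have ex_first : exists z, [&& e z, (u <= z + T)%N & (z <= u)%N].
  by exists u; rewrite eu leq_addr leqnn.
case: (ex_minnP ex_first) => x /and3P[ex le_u_xT le_xu] min_x.
have ex_last : exists z, [&& e z, (u <= z)%N & (z <= x + T)%N].
  by exists u; rewrite eu leqnn le_u_xT.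
have last_bound z : [&& e z, (u <= z)%N & (z <= x + T)%N] -> (z <= x + T)%N.
  by case/and3P.
case: (ex_maxnP ex_last last_bound) => y /and3P[ey le_uy le_y_xT] max_y.
have gap_xy : (y - x < b)%N by apply: (burst_ok_gap burst_e); lia.
exists x, y; split; [lia | lia | move=> z lt_zx le_x_zT | move=> z lt_yz le_z_yT];
  apply/negP => ez.
- have lt_x_zT : (x < z + T.+1)%N by lia.
  have [_ run] := burst_e z z x (leqnn z) (ltnW lt_zx) lt_x_zT ez ex.
  have /min_x : [&& e x.-1, (u <= x.-1 + T)%N & (x.-1 <= u)%N].
    by rewrite run /=; lia.
  lia.
- have lt_z_yT : (z < y + T.+1)%N by lia.
  have [_ run] := burst_e y y z (leqnn y) (ltnW lt_yz) lt_z_yT ey ez.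
  have /max_y : [&& e y.+1, (u <= y.+1)%N & (y.+1 <= x + T)%N].
    by rewrite run /=; lia.
  lia.
Qed.

Section Relay.
Variables (F : fieldType) (b1 b2 p q k : nat).

Lemma delay_le j : (delay b1 b2 p q j <= p.+1 * b1)%N.
Proof.
rewrite /delay; case: ifP => _ //.
by rewrite leq_mul2r (leq_trans (leq_subr _ _) (leqnSn p)) orbT.
Qed.

Lemma relayR_sub (S S' : nat -> 'rV[F]_k) t :
  relayR b1 b2 p q (fun tau => S tau - S' tau) t = relayR b1 b2 p q S t - relayR b1 b2 p q S' t.
Proof. by apply/rowP => j; rewrite !mxE /shiftv; case: ifP => _; rewrite !mxE ?subr0. Qed.

Lemma relayR_delay (S : nat -> 'rV[F]_k) t (j : 'I_k) :
  relayR b1 b2 p q S (t + delay b1 b2 p q j) 0 j = S t 0 j.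
Proof. by rewrite mxE /shiftv leq_addl addnK. Qed.

End Relay.

Section SR2.
Variables (F : fieldType) (b1 b2 p q k : nat).
Local Notation P := (sr2 F b1 b2 p q k).

Lemma sr2_neq0 i (r : 'I_k) (c : 'I_b2) : P i r c != 0 ->
  (exists j, [/\ (0 < j <= p)%N, i = (j * b1)%N & (r : nat) = ((p - j) * b2 + q + c)%N])
  \/ [/\ i = (p.+1 * b1)%N, r = c :> nat & (r < q)%N].
Proof.
rewrite mxE; case: ifP => [|_]; last by rewrite eqxx.
case/orP => [/existsP[j /and3P[j_gt0 /eqP def_i /eqP def_r]]
  | /and3P[/eqP def_i /eqP eq_rc r_lt_q]] _.
- by left; exists j; split=> //; have := ltn_ord j; lia.
- by right.
Qed.

Lemma sr2_block_entry j (r : 'I_k) (c : 'I_b2) :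
  (0 < j <= p)%N -> (r : nat) = ((p - j) * b2 + q + c)%N -> P (j * b1) r c = 1.
Proof.
move=> /andP[j_gt0 j_le_p] def_r; rewrite mxE ifT //; apply/orP; left.
by apply/existsP; exists (Ordinal (j_le_p : j < p.+1)%N); rewrite /= def_r !eqxx j_gt0.
Qed.

Lemma sr2_diag_entry (r : 'I_k) (c : 'I_b2) :
  r = c :> nat -> (r < q)%N -> P (p.+1 * b1) r c = 1.
Proof.
move=> eq_rc r_lt_q; rewrite mxE ifT //; apply/orP; right.
by rewrite eqxx eq_rc eqxx -eq_rc r_lt_q.
Qed.

Hypotheses (b1_gt0 : (0 < b1)%N) (q_lt_b2 : (q < b2)%N) (def_k : k = (p * b2 + q)%N).

Lemma sr2_column (j : 'I_k) : exists c : 'I_b2,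
  P (delay b1 b2 p q j) j c = 1 /\
  forall i (r : 'I_k), P i r c != 0 -> exists2 alpha, (0 < alpha <= p.+1)%N &
    i = (alpha * b1)%N /\ (i = delay b1 b2 p q j -> r = j).
Proof.
have mul_b1_inj m n : (m * b1)%N = (n * b1)%N -> m = n.
  by move/eqP; rewrite eqn_pmul2r // => /eqP.
have lt_jk := ltn_ord j.
case: (ltnP j q) => [lt_jq | le_qj].
  have lt_jb2 : (j < b2)%N by lia.
  exists (Ordinal lt_jb2); rewrite /delay lt_jq; split; first exact: sr2_diag_entry.
  move=> i r /sr2_neq0[[j' [j'_range -> _]] | [-> eq_rc _]].
    by exists j'; [lia | split=> // /mul_b1_inj; lia].
  by exists p.+1; [rewrite leqnn | split=> // _; apply: val_inj].
have lt_mod : ((j - q) %% b2 < b2)%N by rewrite ltn_mod; lia.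
have lt_div : ((j - q) %/ b2 < p)%N by rewrite ltn_divLR; lia.
have def_j := divn_eq (j - q) b2.
rewrite /delay ltnNge le_qj /=.
move: ((j - q) %% b2)%N ((j - q) %/ b2)%N lt_mod lt_div def_j => c m lt_c lt_m def_j.
exists (Ordinal lt_c); split.
  by apply: sr2_block_entry => /=; [lia | rewrite subKn; lia].
move=> i r /sr2_neq0[[j' [j'_range -> def_r]] | [-> _ _]].
  exists j'; [lia | split=> // /mul_b1_inj eq_j'; apply: val_inj => /=].
  by rewrite def_r eq_j' subKn /=; lia.
by exists p.+1; [rewrite leqnn | split=> // /mul_b1_inj; lia].
Qed.

Lemma sr2_relay_silent_eq0 T e (D : nat -> 'rV[F]_k) t :
  (p.+1 * b1 <= T)%N -> burst_ok b1 T.+1 e -> silent e P D t -> relayR b1 b2 p q D t = 0.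
Proof.
move=> le_T burst_e silentD; apply/rowP => j; rewrite !mxE /shiftv.
case: ifP => [le_dt|_]; last by rewrite mxE.
have [c [Pjc col_c]] := sr2_column j.
have := col_c (delay b1 b2 p q j) j; rewrite Pjc oner_neq0.
case=> // beta beta_range [def_d _].
have clear_row (i : nat) (r : 'I_k) : (i <= t)%N -> ~~ e (t - i)%N -> D (t - i)%N 0 r = 0.
  by move=> le_it clear; have [-> _] := silentD _ (leq_subr _ _) clear; rewrite mxE.
case erased : (e (t - delay b1 b2 p q j)%N); last by rewrite clear_row ?erased.
have mul_le m n : (m <= n)%N -> (m * b1 <= n * b1)%N.
  by move=> le_mn; rewrite leq_mul2r le_mn orbT.
have beta_le := mul_le _ _ (proj2 (andP beta_range)).
have [_ par0] : D t = 0 /\ parity P D t = 0.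
  apply: silentD => //; apply: (burst_ok_far burst_e erased); rewrite def_d; try lia.
  by left; have := mul_le 1%N beta; lia.
apply: (parity_eq0_isolated par0 le_dt Pjc) => i r le_it ne_ir.
move=> /col_c[alpha alpha_range [def_i same_r]]; apply: clear_row => //.
have alpha_le := mul_le _ _ (proj2 (andP alpha_range)).
have [lt_ab | lt_ba | eq_ab] := ltngtP alpha beta.
- have := mul_le _ _ lt_ab; rewrite mulSn => le_ab.
  apply: (burst_ok_far burst_e erased); lia.
- have := mul_le _ _ lt_ba; rewrite mulSn => le_ba.
  apply: (burst_ok_far burst_e erased); lia.
- have eq_id : i = delay b1 b2 p q j by rewrite def_i def_d eq_ab.
  by move: ne_ir; rewrite eq_id same_r // eqxx.
Qed.

End SR2.

Section RDCode.
Variables (F : fieldType) (b2 p q k : nat).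
Local Notation P' := (rdcode F b2 p q k).

Lemma rdcode_neq0 i (r : 'I_k) (c : 'I_b2) : P' i r c != 0 ->
  [/\ (0 < i < b2)%N, (r : nat) = (mod1 i q).-1 & (c : nat) = (q + mod1 i (b2 - q)).-1]
  \/ [/\ i = b2, r = c :> nat & (r < q)%N]
  \/ exists j, [/\ (0 < j <= p)%N, i = (j * b2 + q)%N & (r : nat) = ((j - 1) * b2 + q + c)%N].
Proof.
rewrite mxE; case: ifP => [|_]; last by rewrite eqxx.
case/orP => [/orP[/and4P[i_gt0 i_lt /eqP def_r /eqP def_c]
  | /and3P[/eqP def_i /eqP eq_rc r_lt_q]] | /existsP[j /and3P[j_gt0 /eqP def_i /eqP def_r]]] _.
- by left; rewrite i_gt0 i_lt.
- by right; left.
- by right; right; exists j; split=> //; have := ltn_ord j; lia.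
Qed.

Lemma rdcode_single_entry i (r : 'I_k) (c : 'I_b2) : (0 < i < b2)%N ->
  (r : nat) = (mod1 i q).-1 -> (c : nat) = (q + mod1 i (b2 - q)).-1 -> P' i r c = 1.
Proof. by move=> /andP[i_gt0 i_lt] def_r def_c; rewrite mxE i_gt0 i_lt def_r def_c !eqxx. Qed.

Lemma rdcode_diag_entry (r : 'I_k) (c : 'I_b2) : r = c :> nat -> (r < q)%N -> P' b2 r c = 1.
Proof.
move=> eq_rc r_lt_q; rewrite mxE ifT //; apply/orP; left; apply/orP; right.
by rewrite eqxx eq_rc eqxx -eq_rc r_lt_q.
Qed.

Lemma rdcode_block_entry j (r : 'I_k) (c : 'I_b2) :
  (0 < j <= p)%N -> (r : nat) = ((j - 1) * b2 + q + c)%N -> P' (j * b2 + q) r c = 1.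
Proof.
move=> /andP[j_gt0 j_le_p] def_r; rewrite mxE ifT //; apply/orP; right.
by apply/existsP; exists (Ordinal (j_le_p : j < p.+1)%N); rewrite /= def_r !eqxx j_gt0.
Qed.

Lemma rdcode_lag_le i (r : 'I_k) (c : 'I_b2) :
  (0 < p)%N -> P' i r c != 0 -> (i <= p * b2 + q)%N.
Proof.
move=> p_gt0 /rdcode_neq0[[/andP[_ i_lt] _ _] | [[-> _ _] | [j [/andP[_ j_le_p] -> _]]]].
- by have := leq_pmull b2 p_gt0; lia.
- by have := leq_pmull b2 p_gt0; lia.
- by have := leq_mul2r b2 j p; rewrite j_le_p orbT; lia.
Qed.

End RDCode.

Section RDCodeColumns.
Variables (F : fieldType) (b2 p q k : nat).
Local Notation P' := (rdcode F b2 p q k).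

Lemma rdcode_diag_column i (r : 'I_k) (c : 'I_b2) :
  (q < b2)%N -> (c < q)%N -> P' i r c != 0 -> i = b2 /\ r = c :> nat \/ (b2 + q <= i)%N.
Proof.
move=> q_lt_b2 c_lt_q /rdcode_neq0[[_ _ def_c] | [[-> eq_rc _] | [j [/andP[j_gt0 _] -> _]]]].
- by have := mod1_gt0_le i (_ : 0 < b2 - q)%N; rewrite subn_gt0 => /(_ q_lt_b2); lia.
- by left.
- by right; have := leq_pmull b2 j_gt0; lia.
Qed.

Lemma rdcode_staircase_column i0 i (r : 'I_k) (c : 'I_b2) :
  (0 < q)%N -> (q < b2)%N -> (0 < i0 < b2)%N ->
  (c : nat) = (q + mod1 i0 (b2 - q)).-1 -> P' i r c != 0 ->
  [\/ i = i0 /\ (r : nat) = (mod1 i0 q).-1, (i + (b2 - q) <= i0)%N,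
      (i0 + (b2 - q) <= i)%N /\ (r < q)%N | (b2 + q <= i)%N].
Proof.
move=> q_gt0 q_lt_b2 /andP[i0_gt0 i0_lt] def_c /rdcode_neq0.
have bq_gt0 : (0 < b2 - q)%N by rewrite subn_gt0.
case=> [[/andP[i_gt0 i_lt] def_r def_c'] | [[-> eq_rc r_lt_q] | [j [/andP[j_gt0 _] -> _]]]].
- have := mod1_gt0_le i q_gt0; have := mod1_gt0_le i bq_gt0; have := mod1_gt0_le i0 bq_gt0.
  move=> mod_i0 mod_i mod_iq.
  have /eqP : mod1 i (b2 - q) = mod1 i0 (b2 - q) by lia.
  rewrite eq_mod1 // => eq_mod.
  have [lt_ii0 | lt_i0i | eq_ii0] := ltngtP i i0.
  + by apply: Or42; apply: eqn_mod_ltn_addn.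
  + by apply: Or43; split; [rewrite eq_sym in eq_mod; apply: eqn_mod_ltn_addn | lia].
  + by apply: Or41; rewrite def_r eq_ii0.
- by have := mod1_gt0_le i0 bq_gt0; lia.
- by apply: Or44; have := leq_pmull b2 j_gt0; lia.
Qed.

Lemma rdcode_block_column m i (r : 'I_k) (c : 'I_b2) : (0 < q)%N -> P' i r c != 0 ->
  [\/ i = (m.+1 * b2 + q)%N /\ (r : nat) = (m * b2 + q + c)%N, (i <= m * b2 + q)%N,
      (m.+2 * b2 + q <= i)%N | (i <= b2)%N /\ (r < q)%N].
Proof.
move=> q_gt0 /rdcode_neq0[[/andP[_ i_lt] def_r _] | [[-> _ r_lt_q] |
  [j [/andP[j_gt0 _] -> def_r]]]].
- by apply: Or44; have := mod1_gt0_le i q_gt0; lia.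
- by apply: Or44.
have [lt_jm | lt_mj | eq_jm] := ltngtP j m.+1.
- by apply: Or42; rewrite leq_add2r leq_mul2r -ltnS lt_jm orbT.
- by apply: Or43; rewrite leq_add2r leq_mul2r lt_mj orbT.
- by apply: Or41; rewrite def_r eq_jm subn1.
Qed.

End RDCodeColumns.

Section RDDecoding.
Variables (F : fieldType) (b1 b2 p q k T : nat).
Hypotheses (b1_gt0 : (0 < b1)%N) (p_gt0 : (0 < p)%N) (q_gt0 : (0 < q)%N)
  (q_lt_b2 : (q < b2)%N) (def_k : k = (p * b2 + q)%N) (def_T : T = (b1 + k)%N).
Local Notation P' := (rdcode F b2 p q k).
Variables (e : nat -> bool) (D : nat -> 'rV[F]_k) (H : nat).
Hypothesis silentD : silent e P' D H.

Section AroundBurst.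
Variables x y : nat.
Hypotheses (le_xy : (x <= y)%N) (short_xy : (y < x + b2)%N)
  (clear_before : forall z, (z < x)%N -> (x <= z + T)%N -> ~~ e z)
  (clear_after : forall z, (y < z)%N -> (z <= y + T)%N -> ~~ e z).

Lemma off_burst_eq0 z (r : 'I_k) : (z <= H)%N -> (x <= z + T)%N -> (z <= y + T)%N ->
  (z < x)%N \/ (y < z)%N -> D z 0 r = 0.
Proof.
move=> le_zH le_x_zT le_z_yT out_z.
have clear_z : ~~ e z.
  by case: out_z => [lt_zx | lt_yz]; [apply: clear_before | apply: clear_after].
by have [-> _] := silentD le_zH clear_z; rewrite mxE.
Qed.

Lemma parity_after_burst_isolated tau (c : 'I_b2) i0 (r0 : 'I_k) :
  (y < tau <= y + T)%N -> (tau <= H)%N -> (i0 <= tau)%N -> P' i0 r0 c = 1 ->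
  (forall i (r : 'I_k), (i <= tau)%N -> (i, r) != (i0, r0) -> P' i r c != 0 ->
     [\/ (tau - i < x)%N, (y < tau - i)%N | D (tau - i)%N 0 r = 0]) ->
  D (tau - i0)%N 0 r0 = 0.
Proof.
move=> /andP[lt_ytau le_tau_yT] le_tau_H le_i0 P_i0 other.
have [_ par0] := silentD le_tau_H (clear_after lt_ytau le_tau_yT).
apply: (parity_eq0_isolated par0 le_i0 P_i0) => i r le_i ne nz.
have lag := rdcode_lag_le p_gt0 nz.
by case: (other i r le_i ne nz) => [lt|lt|//]; apply: off_burst_eq0; lia.
Qed.

Lemma head_coord_eq0_early w (a : 'I_k) : (x <= w)%N -> (w + (b2 - q) <= y)%N ->
  (w + b2 <= H)%N -> (a < q)%N -> D w 0 a = 0.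
Proof.
move=> le_xw le_wy le_wH a_lt_q; have a_lt_b2 : (a < b2)%N by lia.
rewrite -(addnK b2 w); apply: (parity_after_burst_isolated (c := Ordinal a_lt_b2)).
- by apply/andP; lia.
- by [].
- exact: leq_addl.
- exact: rdcode_diag_entry.
move=> i r le_i ne /(rdcode_diag_column q_lt_b2 (a_lt_q : (Ordinal a_lt_b2 < q)%N)).
case=> [[def_i eq_ra] | lag]; last by apply: Or31; lia.
by move: ne; rewrite def_i (_ : r = a) ?eqxx //; apply: val_inj.
Qed.

(* Downward induction on w: the staircase tap i0 = a + 1 (mod q) brings the parity at
   w + i0 just past y, and the other staircase taps of its column reach either beyond y
   or a head coordinate at an earlier slot. *)
Lemma head_coord_eq0 w (a : 'I_k) : (y + q <= H)%N ->
  (x <= w + T)%N -> (w <= y)%N -> (a < q)%N -> D w 0 a = 0.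
Proof.
move=> le_yqH; elim/ltn_ind: w a => w IHw a le_x_wT le_wy a_lt_q.
have [lt_wx | le_xw] := ltnP w x; first by apply: off_burst_eq0; lia.
have [far | near] := leqP (w + (b2 - q)) y.
  by apply: head_coord_eq0_early => //; lia.
have [s /andP[ge_s lt_s]] := residue_in_window (y - w) a_lt_q.
have bq_gt0 : (0 < b2 - q)%N by rewrite subn_gt0.
have row_a : (a : nat) = (mod1 (s * q + a.+1) q).-1 by rewrite mod1_mulnD1.
have window_i0 : (y - w < s * q + a.+1 <= y - w + q)%N by lia.
have := mod1_gt0_le (s * q + a.+1) bq_gt0.
move: (s * q + a.+1)%N row_a window_i0 => i0 row_a window_i0 mod_i0.
have i0_range : (0 < i0 < b2)%N by lia.
have lt_c : ((q + mod1 i0 (b2 - q)).-1 < b2)%N by lia.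
rewrite -(addnK i0 w); apply: (parity_after_burst_isolated (c := Ordinal lt_c)).
- by apply/andP; lia.
- by lia.
- exact: leq_addl.
- exact: rdcode_single_entry.
move=> i r le_i ne nz; have lag := rdcode_lag_le p_gt0 nz.
case: (rdcode_staircase_column (c := Ordinal lt_c) q_gt0 q_lt_b2 i0_range (erefl _) nz).
- case=> def_i def_r; move: ne; rewrite def_i (_ : r = a) ?eqxx //.
  by apply: val_inj; rewrite /= def_r row_a.
- by move=> before_i0; apply: Or32; lia.
- by case=> after_i0 r_lt_q; apply: Or33; apply: IHw => //; lia.
- by move=> lag_b2q; apply: Or31; lia.
Qed.

Lemma block_coord_eq0 u (j : 'I_k) m c : (m < p)%N -> (c < b2)%N ->
  (j : nat) = (q + m * b2 + c)%N -> (x <= u <= y)%N -> (u + (m.+1 * b2 + q) <= H)%N ->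
  (m = 0 -> y + q <= H)%N -> D u 0 j = 0.
Proof.
move=> lt_mp lt_cb2 def_j /andP[le_xu le_uy] le_uH le_yqH.
have le_mp := leq_mul2r b2 m.+1 p; rewrite lt_mp orbT mulSn in le_mp.
rewrite mulSn in le_uH.
rewrite -(addnK (m.+1 * b2 + q) u); apply: (parity_after_burst_isolated (c := Ordinal lt_cb2)).
- by apply/andP; rewrite mulSn; lia.
- by rewrite mulSn.
- exact: leq_addl.
- apply: rdcode_block_entry; first by rewrite /= lt_mp.
  by rewrite /= subn1 /= def_j; lia.
move=> i r le_i ne nz; rewrite mulSn in le_i.
case: (rdcode_block_column m q_gt0 nz).
- case=> def_i def_r; move: ne; rewrite def_i (_ : r = j) ?eqxx //.
  by apply: val_inj; rewrite /= def_r def_j /=; lia.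
- by move=> lag_le; apply: Or32; rewrite mulSn; lia.
- by rewrite !mulSn => lag_ge; apply: Or31; lia.
case=> lag_le r_lt_q; have [m0 | m_gt0] := posnP m.
- have [after | within] := ltnP y (u + (m.+1 * b2 + q) - i); first exact: Or32.
  apply: Or33; apply: head_coord_eq0 => //; first exact: le_yqH.
  by rewrite mulSn; lia.
- by apply: Or32; have := leq_pmull b2 m_gt0; rewrite mulSn; lia.
Qed.

End AroundBurst.

Lemma rdcode_silent_coord_eq0 u (j : 'I_k) :
  (b1 <= b2)%N -> (p.+1 * b1 + b2 <= T)%N -> burst_ok b2 T.+1 e ->
  (u + (T - delay b1 b2 p q j) <= H)%N -> D u 0 j = 0.
Proof.
move=> b1_le_b2 T_long burst_e le_uH; have lt_jk := ltn_ord j.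
have le_dT : (delay b1 b2 p q j <= T)%N.
  by have := delay_le b1 b2 p q j; lia.
have le_u_H : (u <= H)%N by lia.
case eu : (e u); last by have [-> _] := silentD le_u_H (negbT eu); rewrite mxE.
have le_b2T : (b2 <= T)%N by lia.
have [x [y [/andP[le_xu le_uy] short_xy clear_before clear_after]]] :=
  burst_ok_window burst_e le_b2T eu.
have le_xy : (x <= y)%N by lia.
case: (ltnP j q) => [lt_jq | le_qj].
  rewrite /delay lt_jq in le_uH.
  have [far | near] := leqP (u + (b2 - q)) y.
    by apply: (head_coord_eq0_early (x := x) (y := y)); try done; lia.
  by apply: (head_coord_eq0 (x := x) (y := y)); try done; lia.
rewrite /delay ltnNge le_qj /= in le_uH.
have lt_mod : ((j - q) %% b2 < b2)%N by rewrite ltn_mod; lia.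
have lt_div : ((j - q) %/ b2 < p)%N by rewrite ltn_divLR; lia.
have def_j := divn_eq (j - q) b2.
move: ((j - q) %/ b2)%N ((j - q) %% b2)%N lt_div lt_mod def_j le_uH => m c lt_mp lt_cb2 def_j.
have [rest def_p] : exists rest, p = (m.+1 + rest)%N by exists (p - m.+1)%N; lia.
have le_rest : (rest * b1 <= rest * b2)%N by rewrite leq_mul2l b1_le_b2 orbT.
have lag_le : (m.+1 * b2 + q + (p - m) * b1 <= T)%N.
  rewrite def_T def_k def_p (_ : m.+1 + rest - m = rest.+1)%N; last by lia.
  by rewrite !mulnDl !mulSn; lia.
move=> le_uH; rewrite mulSn in lag_le.
apply: (block_coord_eq0 le_xy short_xy clear_before clear_after (m := m) (c := c));
  rewrite ?mulSn; lia.
Qed.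

End RDDecoding.

Lemma rdcode_relay_silent_eq0 (F : fieldType) b1 b2 p q k T e (S : nat -> 'rV[F]_k) t :
  (0 < b1)%N -> (b1 <= b2)%N -> (0 < p)%N -> (0 < q)%N -> (q < b2)%N ->
  k = (p * b2 + q)%N -> T = (b1 + k)%N -> (p.+1 * b1 + b2 <= T)%N -> burst_ok b2 T.+1 e ->
  silent e (rdcode F b2 p q k) (relayR b1 b2 p q S) (t + T) -> S t = 0.
Proof.
move=> b1_gt0 b1_le_b2 p_gt0 q_gt0 q_lt_b2 def_k def_T T_long burst_e silentR.
apply/rowP => j; rewrite mxE -(relayR_delay b1 b2 p q S t j).
apply: (rdcode_silent_coord_eq0 b1_gt0 p_gt0 q_gt0 q_lt_b2 def_k def_T silentR) => //.
by have := delay_le b1 b2 p q j; lia.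
Qed.

Lemma Rcap_eq_l b1 b2 T : (0 < b1)%N -> (b1 <= b2)%N -> (b1 + b2 <= T)%N ->
  Rcap b1 b2 T = (T - b1)%:R / (T - b1 + b2)%:R.
Proof.
move=> b1_gt0 b1_le_b2 le_T; rewrite /Rcap; apply: min_l.
have den1 : (0 : rat) < (T - b1 + b2)%:R by rewrite ltr0n; lia.
have den2 : (0 : rat) < (T - b2 + b1)%:R by rewrite ltr0n; lia.
rewrite ler_pdivrMr // mulrAC ler_pdivlMr // -!natrM ler_nat.
have [s def_T] : exists s, T = (b1 + b2 + s)%N by exists (T - (b1 + b2))%N; lia.
have -> : (T - b1 = b2 + s)%N by lia.
have -> : (T - b2 = b1 + s)%N by lia.
nia.
Qed.

Theorem mainTheorem6 (F : fieldType) (b1 b2 T p q : nat)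
  (hb1 : (0 < b1)%N) (hb12 : (b1 < b2)%N) (hT : (b1 + b2 <= T)%N)
  (hpq : (T - b1)%N = (p * b2 + q)%N) (hp : (1 <= p)%N)
  (hq1 : (1 <= q)%N) (hq2 : (q < b2)%N)
  (hcond : (((T - b1) %/ b2).+1%:R <= (T - b2)%:R / b1%:R :> rat)) :
  @tbsc_valid F (T - b1) b2 b2 b1 b2 T (sr2 F b1 b2 p q (T - b1)) (rdcode F b2 p q (T - b1))
    (@relayR F b1 b2 p q (T - b1))
  /\ code_rate (T - b1) (T - b1 + b2) = Rcap b1 b2 T.
Proof.
have p_div : ((T - b1) %/ b2)%N = p by rewrite hpq divnMDl ?divn_small; lia.
have T_long : (p.+1 * b1 + b2 <= T)%N.
  by move: hcond; rewrite p_div ler_pdivlMr ?ltr0n // -natrM ler_nat; lia.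
have def_T : T = (b1 + (T - b1))%N by lia.
split; first split.
- apply: (linear_decoder_exists (enc := fun S => S) (h := id)) => // [S S' t|e S t burst_e].
    exact: relayR_sub.
  by apply: sr2_relay_silent_eq0 burst_e; lia.
- apply: (linear_decoder_exists (enc := @relayR F b1 b2 p q (T - b1)) (f := fun t S => S t)
    (h := fun t => t + T)%N) => // [S S' t|e S t burst_e].
    exact: relayR_sub.
  by apply: rdcode_relay_silent_eq0 burst_e; lia.
- by rewrite /code_rate Rcap_eq_l //; lia.
Qed.
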